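(* Let $\lambda>0$, $\ell>0$ and let $n\ge n_{\lambda,\ell}$ be an integer. Then $\mathcal{E}_\lambda[\gamma_{\rm larc}^{\lambda,\ell,n}]\le\mathcal{E}_\lambda[\gamma_{\rm sarc}^{\lambda,\ell,n}]$, with equality if and only if $\lambda\ell^2=m^2\hat\lambda$ for some $m\in\mathbb{N}$ and $n=n_{\lambda,\ell}$.
   Context: Elliptic functions: for $q\in[0,1)$, $x\in\mathbb{R}$, $\mathrm{F}(x,q)=\int_0^x(1-q^2\sin^2\theta)^{-1/2}\,d\theta$, $\mathrm{E}(x,q)=\int_0^x(1-q^2\sin^2\theta)^{1/2}\,d\theta$, $\mathrm{K}(q)=\mathrm{F}(\pi/2,q)$, $\mathrm{E}(q)=\mathrm{E}(\pi/2,q)$; $\mathrm{am}(\cdot,q)$ is the inverse of $x\mapsto\mathrm{F}(x,q)$, $\mathrm{cn}(x,q)=\cos\mathrm{am}(x,q)$. The function $q\mapsto2\mathrm{E}(q)-\mathrm{K}(q)$ is strictly decreasing on $[0,1)$ with unique zero $q_*\in(0,1)$. On $[1/\sqrt2,1)$ let $f(q)=(4q^4-5q^2+1)\mathrm{K}(q)+(-8q^4+8q^2-1)\mathrm{E}(q)$ and $g(q)=8(2\mathrm{E}(q)-\mathrm{K}(q))^2(2q^2-1)$. $f$ has a unique zero $\hat q\in[1/\sqrt2,1)$; $\hat\lambda:=g(\hat q)\approx0.70107$. $g(1/\sqrt2)=0$, $g$ strictly increasing on $[1/\sqrt2,\hat q]$, strictly decreasing on $[\hat q,q_*]$. For $c\in(0,\hat\lambda]$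 let $q_1(c)\in(1/\sqrt2,\hat q]$, $q_2(c)\in[\hat q,q_* )$ solve $g(q)=c$ ($q_1(\hat\lambda)=q_2(\hat\lambda)=\hat q$). $n_{\lambda,\ell}=\lceil\sqrt{\lambda\ell^2/\hat\lambda}\rceil$. $\mathcal{E}_\lambda[\gamma]=\int_\gamma k^2\,ds+\lambda L[\gamma]$ ($k$ signed curvature, $s$ arclength, $L$ length). Curves (arclength parametrized on $[0,2n\mathrm{K}(q)/\alpha]$): for $n\ge n_{\lambda,\ell}$, $\gamma_{\rm sarc}^{\lambda,\ell,n}(s)=\frac1\alpha\big(2\mathrm{E}(\mathrm{am}(\alpha s-\mathrm{K}(q),q),q)+2\mathrm{E}(q)-\alpha s,\ 2q\,\mathrm{cn}(\alpha s-\mathrm{K}(q),q)\big)$ with $q=q_1(\lambda\ell^2/n^2)$, $\alpha=\frac{2n}{\ell}(2\mathrm{E}(q)-\mathrm{K}(q))$; $\gamma_{\rm larc}^{\lambda,\ell,n}$ is the same formula with $q=q_2(\lambda\ell^2/n^2)$. *)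

From Stdlib Require Import Reals Lra ZArith ClassicalEpsilon.
From Coquelicot Require Import Coquelicot.
Open Scope R_scope.

Definition EllF (x q : R) : R :=
  RInt (fun th => / sqrt (1 - q ^ 2 * (sin th) ^ 2)) 0 x.
Definition EllE (x q : R) : R :=
  RInt (fun th => sqrt (1 - q ^ 2 * (sin th) ^ 2)) 0 x.
Definition EllK (q : R) : R := EllF (PI / 2) q.
Definition EllEc (q : R) : R := EllE (PI / 2) q.

(* Jacobi amplitude: the inverse of x |-> F(x,q) (chosen by epsilon; for
   q in [0,1) it is the unique x with F(x,q) = u). *)
Definition am (u q : R) : R :=
  epsilon (inhabits 0) (fun x => EllF x q = u).
Definition cn (u q : R) : R := cos (am u q).

Definition qstar : R :=
  epsilon (inhabits 0) (fun q => 0 < q < 1 /\ 2 * EllEc q - EllK q = 0).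

Definition ff (q : R) : R :=
  (4 * q ^ 4 - 5 * q ^ 2 + 1) * EllK q + (- 8 * q ^ 4 + 8 * q ^ 2 - 1) * EllEc q.
Definition gg (q : R) : R :=
  8 * (2 * EllEc q - EllK q) ^ 2 * (2 * q ^ 2 - 1).

Definition qhat : R :=
  epsilon (inhabits 0) (fun q => / sqrt 2 <= q < 1 /\ ff q = 0).
Definition lamhat : R := gg qhat.

Definition q1 (c : R) : R :=
  epsilon (inhabits 0) (fun q => / sqrt 2 < q <= qhat /\ gg q = c).
Definition q2 (c : R) : R :=
  epsilon (inhabits 0) (fun q => qhat <= q < qstar /\ gg q = c).

Definition ceilZ (x : R) : Z :=
  if Req_EM_T (IZR (up x) - 1) x then (up x - 1)%Z else up x.

Definition nlam (lam l : R) : nat :=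
  Z.to_nat (ceilZ (sqrt (lam * l ^ 2 / lamhat))).

Definition xc (g : R -> R * R) (s : R) : R := fst (g s).
Definition yc (g : R -> R * R) (s : R) : R := snd (g s).
Definition speed (g : R -> R * R) (s : R) : R :=
  sqrt ((Derive (xc g) s) ^ 2 + (Derive (yc g) s) ^ 2).
Definition curv (g : R -> R * R) (s : R) : R :=
  (Derive (xc g) s * Derive (Derive (yc g)) s
   - Derive (yc g) s * Derive (Derive (xc g)) s) / (speed g s) ^ 3.
Definition Energy (lam : R) (g : R -> R * R) (L : R) : R :=
  RInt (fun s => (curv g s) ^ 2 * speed g s) 0 L
  + lam * RInt (fun s => speed g s) 0 L.

Definition alpha_of (l : R) (n : nat) (q : R) : R :=
  2 * INR n / l * (2 * EllEc q - EllK q).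
Definition gamma_q (l : R) (n : nat) (q : R) (s : R) : R * R :=
  let a := alpha_of l n q in
  (/ a * (2 * EllE (am (a * s - EllK q) q) q + 2 * EllEc q - a * s),
   / a * (2 * q * cn (a * s - EllK q) q)).
Definition length_q (l : R) (n : nat) (q : R) : R :=
  2 * INR n * EllK q / alpha_of l n q.

Definition q_sarc (lam l : R) (n : nat) : R := q1 (lam * l ^ 2 / (INR n) ^ 2).
Definition q_larc (lam l : R) (n : nat) : R := q2 (lam * l ^ 2 / (INR n) ^ 2).

Definition gamma_sarc (lam l : R) (n : nat) : R -> R * R :=
  gamma_q l n (q_sarc lam l n).
Definition gamma_larc (lam l : R) (n : nat) : R -> R * R :=
  gamma_q l n (q_larc lam l n).

Definition energy_sarc (lam l : R) (n : nat) : R :=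
  Energy lam (gamma_sarc lam l n) (length_q l n (q_sarc lam l n)).
Definition energy_larc (lam l : R) (n : nat) : R :=
  Energy lam (gamma_larc lam l n) (length_q l n (q_larc lam l n)).

From Stdlib Require Import Reals Lra Lia ZArith ClassicalEpsilon Ranalysis5 FunctionalExtensionality.
From Coquelicot Require Import Coquelicot.
Open Scope R_scope.

(** Both arcs belong to the family [gamma_q] of arclength-parametrized curves with
    curvature [-2 q alpha cn], so the energy of the arc of modulus [q] is explicit:
    with [h = 2E - K] and [c = lam l^2 / n^2] it equals
    [(n^2 / l) (16 h (E - (1 - q^2) K) + c K / h)].  Using the classical formulas for
    [K'] and [E'], its derivative in [q] is [(n^2 / l) (c - g(q)) (K / h)'], where
    [(K / h)' > 0] and [g > c] strictly between [q1 c] and [q2 c].  So the energy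
    decreases from [q_sarc = q1 c] to [q_larc = q2 c], strictly unless [q1 c = q2 c],
    i.e. unless [c = lamhat]; and for [n >= n_{lam,l}] this happens exactly when
    [lam l^2 = m^2 lamhat] and [n = m = n_{lam,l}].  The same derivative formulas,
    with [K >= pi/2 >= E] and a logarithmic lower bound for [K], locate [q*] and [q^]
    and give the monotonicity of [g] that makes [q1], [q2] well defined. *)

(* Equalities between real integrals are stated with [:> R]: at Coquelicot's module
   carrier type [field] and [lra] do not recognise them. *)

Lemma continuity_pt_of_is_derive (f : R -> R) x l : is_derive f x l -> continuity_pt f x.
Proof.
  intros H. apply continuity_pt_filterlim, (@ex_derive_continuous R_AbsRing R_NormedModule).
  now exists l.
Qed.

Lemma continuity_pt_of_ex_derive (f : R -> R) x : ex_derive f x -> continuity_pt f x.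
Proof. intros [l H]. eapply continuity_pt_of_is_derive, H. Qed.

Lemma ex_RInt_of_ex_derive (f : R -> R) a b : (forall x, ex_derive f x) -> ex_RInt f a b.
Proof.
  intros Hf. apply (@ex_RInt_continuous R_CompleteNormedModule). intros x _.
  apply (@ex_derive_continuous R_AbsRing R_NormedModule), Hf.
Qed.

Lemma RInt_antiderivative (F f : R -> R) a b :
  (forall x, is_derive F x (f x)) -> (forall x, continuous f x) -> RInt f a b = F b - F a :> R.
Proof.
  intros HF Hf. apply is_RInt_unique.
  apply (@is_RInt_derive R_CompleteNormedModule); intros x _; auto.
Qed.

Lemma is_derive_RInt_upper (f : R -> R) x : (forall a b, ex_RInt f a b) -> continuous f x ->
  is_derive (fun y => RInt f 0 y) x (f x).
Proof.
  intros Hf Hc. apply (@is_derive_RInt R_CompleteNormedModule f _ 0 x); auto.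
  apply filter_forall. intros b. now apply (@RInt_correct R_CompleteNormedModule).
Qed.

Lemma RInt_ext_R (f g : R -> R) a b : (forall x, f x = g x) -> RInt f a b = RInt g a b :> R.
Proof. intros H. apply RInt_ext. intros x _. apply H. Qed.

Lemma RInt_one a b : RInt (fun _ => 1) a b = b - a :> R.
Proof. rewrite RInt_const. apply Rmult_1_r. Qed.

Lemma RInt_scal_R (f : R -> R) (c : R) a b : ex_RInt f a b ->
  RInt (fun t => c * f t) a b = c * RInt f a b :> R.
Proof. intros Hf. exact (@RInt_scal R_CompleteNormedModule f a b c Hf). Qed.

Lemma RInt_minus_R (f g : R -> R) a b : ex_RInt f a b -> ex_RInt g a b ->
  RInt (fun t => f t - g t) a b = RInt f a b - RInt g a b :> R.
Proof. intros Hf Hg. exact (@RInt_minus R_CompleteNormedModule f g a b Hf Hg). Qed.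

Lemma RInt_lin_comb (f g : R -> R) (c d : R) a b : ex_RInt f a b -> ex_RInt g a b ->
  RInt (fun t => c * f t - d * g t) a b = c * RInt f a b - d * RInt g a b :> R.
Proof.
  intros Hf Hg. apply is_RInt_unique.
  apply (@is_RInt_minus R_CompleteNormedModule (fun t => c * f t) (fun t => d * g t));
    apply (@is_RInt_scal R_CompleteNormedModule); now apply RInt_correct.
Qed.

Lemma is_derive_chain (h u : R -> R) (s dh du : R) :
  is_derive h (u s) dh -> is_derive u s du -> is_derive (fun t => h (u t)) s (dh * du).
Proof.
  intros Hh Hu. rewrite Rmult_comm. exact (is_derive_comp h u s dh du Hh Hu).
Qed.

Lemma is_derive_eq (f : R -> R) (x l l' : R) : is_derive f x l -> l = l' -> is_derive f x l'.
Proof. now intros H <-. Qed.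

Lemma derive_le0_nonincreasing f df a b : a <= b ->
  (forall x, a <= x <= b -> is_derive f x (df x)) -> (forall x, a < x < b -> df x <= 0) ->
  f b <= f a.
Proof.
  intros [Hab | ->] Hd Hn; [|lra].
  destruct (MVT_cor2 f df a b Hab) as [c [Hc Hic]].
  - intros x Hx. now apply is_derive_Reals, Hd.
  - specialize (Hn c Hic). nra.
Qed.

Lemma derive_lt0_decreasing f df a b : a < b ->
  (forall x, a <= x <= b -> is_derive f x (df x)) -> (forall x, a < x < b -> df x < 0) ->
  f b < f a.
Proof.
  intros Hab Hd Hn. destruct (MVT_cor2 f df a b Hab) as [c [Hc Hic]].
  - intros x Hx. now apply is_derive_Reals, Hd.
  - specialize (Hn c Hic). nra.
Qed.

Lemma derive_ge0_nondecreasing f df a b : a <= b ->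
  (forall x, a <= x <= b -> is_derive f x (df x)) -> (forall x, a < x < b -> 0 <= df x) ->
  f a <= f b.
Proof.
  intros Hab Hd Hp. enough (- f b <= - f a) by lra.
  apply (derive_le0_nonincreasing (fun x => - f x) (fun x => - df x)); auto.
  - intros x Hx. now apply (is_derive_opp f), Hd.
  - intros x Hx. specialize (Hp x Hx). lra.
Qed.

Lemma derive_gt0_increasing f df a b : a < b ->
  (forall x, a <= x <= b -> is_derive f x (df x)) -> (forall x, a < x < b -> 0 < df x) ->
  f a < f b.
Proof.
  intros Hab Hd Hp. enough (- f b < - f a) by lra.
  apply (derive_lt0_decreasing (fun x => - f x) (fun x => - df x)); auto.
  - intros x Hx. now apply (is_derive_opp f), Hd.
  - intros x Hx. specialize (Hp x Hx). lra.
Qed.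

Lemma radicand_pos q t : q ^ 2 < 1 -> 0 < 1 - q ^ 2 * sin t ^ 2.
Proof.
  intros Hq. assert (0 <= sin t ^ 2 <= 1) by (pose proof (SIN_bound t); nra). nra.
Qed.

Lemma sqrt_radicand_pos q t : q ^ 2 < 1 -> 0 < sqrt (1 - q ^ 2 * sin t ^ 2).
Proof. intros Hq. now apply sqrt_lt_R0, radicand_pos. Qed.

Lemma sqrt_radicand_sqr q t : q ^ 2 < 1 ->
  sqrt (1 - q ^ 2 * sin t ^ 2) * sqrt (1 - q ^ 2 * sin t ^ 2) = 1 - q ^ 2 * sin t ^ 2.
Proof. intros Hq. now apply sqrt_sqrt, Rlt_le, radicand_pos. Qed.

Lemma sqrt_radicand_le_1 q t : sqrt (1 - q ^ 2 * sin t ^ 2) <= 1.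
Proof.
  rewrite <- sqrt_1 at 2. apply sqrt_le_1_alt.
  assert (0 <= q ^ 2 * sin t ^ 2) by (apply Rmult_le_pos; apply pow2_ge_0). lra.
Qed.

Lemma cos_sqr x : cos x ^ 2 = 1 - sin x ^ 2.
Proof. rewrite <- (sin2_cos2 x). unfold Rsqr. ring. Qed.

(* [auto_derive] writes the radicand as [1 + - (q * (q * 1) * (sin t * (sin t * 1)))]:
   fold it back and record its positivity and that of its square root. *)
Ltac radicand_facts :=
  repeat match goal with
  | |- context [1 + - (?q * (?q * 1) * (sin ?t * (sin ?t * 1)))] =>
      replace (1 + - (q * (q * 1) * (sin t * (sin t * 1)))) with (1 - q ^ 2 * sin t ^ 2) by ring
  end;
  repeat match goal with
  | Hq : ?q ^ 2 < 1 |- context [sin ?t] =>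
      lazymatch goal with
      | _ : 0 < 1 - q ^ 2 * sin t ^ 2 |- _ => fail
      | _ => pose proof (radicand_pos q t Hq); pose proof (sqrt_radicand_pos q t Hq)
      end
  end.

Ltac radicand_side := radicand_facts; repeat split; try lra; try nra.

Definition EllJ1 (q : R) : R :=
  RInt (fun t => sin t ^ 2 / sqrt (1 - q ^ 2 * sin t ^ 2)) 0 (PI / 2).
Definition EllJ3 (q : R) : R :=
  RInt (fun t => sin t ^ 2 / (sqrt (1 - q ^ 2 * sin t ^ 2) * (1 - q ^ 2 * sin t ^ 2))) 0 (PI / 2).

Section Radicand.
Variable q : R.
Hypothesis Hq : q ^ 2 < 1.

Lemma ex_RInt_inv_sqrt_radicand a b : ex_RInt (fun t => / sqrt (1 - q ^ 2 * sin t ^ 2)) a b.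
Proof. apply ex_RInt_of_ex_derive; intros x; auto_derive; radicand_side. Qed.

Lemma ex_RInt_sqrt_radicand a b : ex_RInt (fun t => sqrt (1 - q ^ 2 * sin t ^ 2)) a b.
Proof. apply ex_RInt_of_ex_derive; intros x; auto_derive; radicand_side. Qed.

Lemma continuous_inv_sqrt_radicand x : continuous (fun t => / sqrt (1 - q ^ 2 * sin t ^ 2)) x.
Proof. apply (@ex_derive_continuous R_AbsRing R_NormedModule); auto_derive; radicand_side. Qed.

Lemma continuous_sqrt_radicand x : continuous (fun t => sqrt (1 - q ^ 2 * sin t ^ 2)) x.
Proof. apply (@ex_derive_continuous R_AbsRing R_NormedModule); auto_derive; radicand_side. Qed.

Lemma ex_RInt_EllJ1_integrand a b :
  ex_RInt (fun t => sin t ^ 2 / sqrt (1 - q ^ 2 * sin t ^ 2)) a b.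
Proof. apply ex_RInt_of_ex_derive; intros x; auto_derive; radicand_side. Qed.

Lemma ex_RInt_EllJ3_integrand a b :
  ex_RInt (fun t => sin t ^ 2 / (sqrt (1 - q ^ 2 * sin t ^ 2) * (1 - q ^ 2 * sin t ^ 2))) a b.
Proof. apply ex_RInt_of_ex_derive; intros x; auto_derive; radicand_side. Qed.

Lemma EllK_sub_EllEc : EllK q - EllEc q = q ^ 2 * EllJ1 q.
Proof.
  unfold EllK, EllEc, EllF, EllE, EllJ1.
  rewrite <- RInt_minus_R, <- RInt_scal_R
    by auto using ex_RInt_inv_sqrt_radicand, ex_RInt_sqrt_radicand, ex_RInt_EllJ1_integrand.
  apply RInt_ext_R. intros t. pose proof (sqrt_radicand_pos q t Hq) as Hs.
  pose proof (sqrt_radicand_sqr q t Hq) as Hss.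
  set (s := sqrt (1 - q ^ 2 * sin t ^ 2)) in *.
  replace (/ s - s) with ((1 - s * s) / s) by (field; lra). rewrite Hss. field. lra.
Qed.

(* The combination below is the derivative of [sin t cos t / sqrt (1 - q^2 sin^2 t)],
   which vanishes at [0] and [pi/2]. *)
Lemma EllJ3_identity : (1 - q ^ 2) * EllJ3 q = EllK q - EllJ1 q.
Proof.
  assert (Hzero : RInt (fun t =>
      (/ sqrt (1 - q ^ 2 * sin t ^ 2) - sin t ^ 2 / sqrt (1 - q ^ 2 * sin t ^ 2))
      - (1 - q ^ 2) * (sin t ^ 2 / (sqrt (1 - q ^ 2 * sin t ^ 2) * (1 - q ^ 2 * sin t ^ 2))))
      0 (PI / 2) = 0 :> R).
  { rewrite (RInt_antiderivative (fun t => sin t * cos t / sqrt (1 - q ^ 2 * sin t ^ 2))).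
    - rewrite sin_PI2, cos_PI2, sin_0. unfold Rdiv. ring.
    - intros x. auto_derive; [radicand_side|]. radicand_facts.
      pose proof (sqrt_radicand_sqr q x Hq) as Hss.
      set (s := sqrt (1 - q ^ 2 * sin x ^ 2)) in *. set (D := 1 - q ^ 2 * sin x ^ 2) in *.
      field_simplify; try (repeat split; lra).
      replace (s ^ 3) with (s * D) by (rewrite <- Hss; ring).
      replace (s ^ 2) with D by (rewrite <- Hss; ring).
      rewrite cos_sqr. unfold D in *. field. split; lra.
    - intros y. apply (@ex_derive_continuous R_AbsRing R_NormedModule). auto_derive; radicand_side. }
  rewrite RInt_minus_R, RInt_minus_R, RInt_scal_R in Hzero;
    auto using ex_RInt_inv_sqrt_radicand, ex_RInt_EllJ1_integrand, ex_RInt_EllJ3_integrand.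
  - unfold EllK, EllF, EllJ1, EllJ3. lra.
  - apply (@ex_RInt_minus R_CompleteNormedModule);
      auto using ex_RInt_inv_sqrt_radicand, ex_RInt_EllJ1_integrand.
  - apply (@ex_RInt_scal R_CompleteNormedModule); auto using ex_RInt_EllJ3_integrand.
Qed.

End Radicand.

(** * Derivatives and bounds of [K] and [E] in the modulus *)

Lemma sqr_lt_1_near q : q ^ 2 < 1 -> locally q (fun u => u ^ 2 < 1).
Proof.
  intros Hq. assert (Hq' : Rabs q < 1) by (rewrite <- (pow2_abs q) in Hq; pose proof (Rabs_pos q); nra).
  assert (He : 0 < 1 - Rabs q) by lra.
  exists (mkposreal _ He). intros u Hu. change (Rabs (u - q) < 1 - Rabs q) in Hu.
  pose proof (Rabs_triang_inv u q). rewrite <- (pow2_abs u). pose proof (Rabs_pos u). nra.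
Qed.

Lemma sqr_lt_1_near_2d q t : q ^ 2 < 1 -> locally_2d (fun u _ => u ^ 2 < 1) q t.
Proof.
  intros Hq. destruct (sqr_lt_1_near q Hq) as [e He].
  exists e. intros u v Hu _. now apply He.
Qed.

Lemma continuity_2d_pt_radicand u v : continuity_2d_pt (fun u v => 1 - u ^ 2 * sin v ^ 2) u v.
Proof.
  apply (continuity_2d_pt_ext (fun u v => 1 - (u * u) * (sin v * sin v))); [intros; ring|].
  assert (Hsin : continuity_2d_pt (fun _ v => sin v) u v).
  { apply (continuity_1d_2d_pt_comp sin (fun _ v => v)); [apply continuity_sin|apply continuity_2d_pt_id2]. }
  apply continuity_2d_pt_minus; [apply continuity_2d_pt_const|].
  apply continuity_2d_pt_mult; apply continuity_2d_pt_mult; auto; apply continuity_2d_pt_id1.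
Qed.

Lemma is_derive_RInt_radicand (w dw : R -> R) q :
  q ^ 2 < 1 ->
  (forall x, 0 < x -> is_derive w x (dw x)) -> (forall x, 0 < x -> continuity_pt dw x) ->
  is_derive (fun u => RInt (fun t => w (1 - u ^ 2 * sin t ^ 2)) 0 (PI / 2)) q
    (RInt (fun t => - 2 * q * sin t ^ 2 * dw (1 - q ^ 2 * sin t ^ 2)) 0 (PI / 2)).
Proof.
  intros Hq Hw Hdw.
  assert (Hpartial : forall u t, u ^ 2 < 1 ->
    is_derive (fun z => w (1 - z ^ 2 * sin t ^ 2)) u (- 2 * u * sin t ^ 2 * dw (1 - u ^ 2 * sin t ^ 2))).
  { intros u t Hu. eapply is_derive_eq.
    - apply (is_derive_chain w (fun z => 1 - z ^ 2 * sin t ^ 2)); [apply Hw, radicand_pos, Hu|].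
      auto_derive; auto.
    - simpl. ring. }
  assert (Hcont : forall t, continuity_2d_pt
      (fun u t => - 2 * u * sin t ^ 2 * dw (1 - u ^ 2 * sin t ^ 2)) q t).
  { intros t.
    assert (Hsin2 : continuity_2d_pt (fun _ v => sin v ^ 2) q t).
    { apply (continuity_1d_2d_pt_comp (fun x => x ^ 2) (fun _ v => sin v)).
      - apply derivable_continuous_pt, derivable_pt_pow.
      - apply (continuity_1d_2d_pt_comp sin (fun _ v => v));
          [apply continuity_sin|apply continuity_2d_pt_id2]. }
    apply continuity_2d_pt_mult; [apply continuity_2d_pt_mult; [|exact Hsin2]|].
    - apply continuity_2d_pt_mult; [apply continuity_2d_pt_const|apply continuity_2d_pt_id1].
    - apply (continuity_1d_2d_pt_comp dw (fun u v => 1 - u ^ 2 * sin v ^ 2)).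
      + now apply Hdw, radicand_pos.
      + apply continuity_2d_pt_radicand. }
  eapply is_derive_eq.
  - apply (is_derive_RInt_param (fun u t => w (1 - u ^ 2 * sin t ^ 2))).
    + generalize (sqr_lt_1_near q Hq). apply filter_imp.
      intros u Hu t _. eexists. now apply Hpartial.
    + intros t _. eapply continuity_2d_pt_ext_loc; [|apply (Hcont t)].
      generalize (sqr_lt_1_near_2d q t Hq). apply locally_2d_impl, locally_2d_forall.
      intros u v Hu. symmetry. now apply is_derive_unique, Hpartial.
    + generalize (sqr_lt_1_near q Hq). apply filter_imp. intros u Hu.
      apply ex_RInt_of_ex_derive. intros t. eexists.
      apply (is_derive_chain w (fun t => 1 - u ^ 2 * sin t ^ 2)); [apply Hw, radicand_pos, Hu|].
      auto_derive; auto.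
  - apply RInt_ext_R. intros t. now apply is_derive_unique, Hpartial.
Qed.

Lemma is_derive_EllK_EllJ3 q : q ^ 2 < 1 -> is_derive EllK q (q * EllJ3 q).
Proof.
  intros Hq. eapply is_derive_eq.
  - apply (is_derive_RInt_radicand (fun x => / sqrt x) (fun x => - / (2 * (sqrt x * x)))); auto.
    + intros x Hx. pose proof (sqrt_lt_R0 x Hx). auto_derive; [lra|].
      rewrite sqrt_sqrt by lra. field. lra.
    + intros x Hx. pose proof (sqrt_lt_R0 x Hx). apply continuity_pt_of_ex_derive.
      auto_derive. split; [lra|]. split; [nra|exact I].
  - unfold EllJ3. rewrite <- RInt_scal_R by now apply ex_RInt_EllJ3_integrand.
    apply RInt_ext_R. intros t. radicand_facts. field. lra.
Qed.

Lemma is_derive_EllEc_EllJ1 q : q ^ 2 < 1 -> is_derive EllEc q (- q * EllJ1 q).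
Proof.
  intros Hq. eapply is_derive_eq.
  - apply (is_derive_RInt_radicand sqrt (fun x => / (2 * sqrt x))); auto.
    + intros x Hx. auto_derive; [lra|]. field. pose proof (sqrt_lt_R0 x Hx). lra.
    + intros x Hx. pose proof (sqrt_lt_R0 x Hx). apply continuity_pt_of_ex_derive.
      auto_derive. lra.
  - unfold EllJ1. rewrite <- RInt_scal_R by now apply ex_RInt_EllJ1_integrand.
    apply RInt_ext_R. intros t. radicand_facts. field. lra.
Qed.

Lemma PI2_pos : 0 < PI / 2.
Proof. pose proof PI_RGT_0. lra. Qed.

Lemma RInt_sin_sqr : RInt (fun t => sin t ^ 2) 0 (PI / 2) = PI / 4 :> R.
Proof.
  rewrite (RInt_antiderivative (fun t => (t - sin t * cos t) / 2)).
  - rewrite sin_PI2, cos_PI2, sin_0, cos_0. field.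
  - intros x. auto_derive; auto. pose proof (cos_sqr x). lra.
  - intros x. apply (@ex_derive_continuous R_AbsRing R_NormedModule). auto_derive; auto.
Qed.

Lemma RInt_cos_sqr : RInt (fun t => cos t ^ 2) 0 (PI / 2) = PI / 4 :> R.
Proof.
  rewrite (RInt_antiderivative (fun t => (t + sin t * cos t) / 2)).
  - rewrite sin_PI2, cos_PI2, sin_0, cos_0. field.
  - intros x. auto_derive; auto. pose proof (cos_sqr x). lra.
  - intros x. apply (@ex_derive_continuous R_AbsRing R_NormedModule). auto_derive; auto.
Qed.

Lemma ex_RInt_sin_sqr a b : ex_RInt (fun t => sin t ^ 2) a b.
Proof. apply ex_RInt_of_ex_derive. intros x. auto_derive. auto. Qed.

Lemma ex_RInt_cos_sqr a b : ex_RInt (fun t => cos t ^ 2) a b.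
Proof. apply ex_RInt_of_ex_derive. intros x. auto_derive. auto. Qed.

Lemma one_le_inv a : 0 < a -> a <= 1 -> 1 <= / a.
Proof. intros. rewrite <- Rinv_1. now apply Rinv_le_contravar. Qed.

Section Bounds.
Variable q : R.
Hypothesis Hq : q ^ 2 < 1.

Lemma EllK_ge : PI / 2 <= EllK q.
Proof.
  rewrite <- (Rminus_0_r (PI / 2)), <- RInt_one. apply RInt_le.
  - pose proof PI2_pos. lra.
  - apply ex_RInt_const.
  - now apply ex_RInt_inv_sqrt_radicand.
  - intros x _. apply one_le_inv; [now apply sqrt_radicand_pos|apply sqrt_radicand_le_1].
Qed.

Lemma EllEc_le : EllEc q <= PI / 2.
Proof.
  rewrite <- (Rminus_0_r (PI / 2)), <- RInt_one. apply RInt_le.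
  - pose proof PI2_pos. lra.
  - now apply ex_RInt_sqrt_radicand.
  - apply ex_RInt_const.
  - intros x _. apply sqrt_radicand_le_1.
Qed.

Lemma EllEc_pos : 0 < EllEc q.
Proof.
  apply Rlt_le_trans with (RInt (fun _ => sqrt (1 - q ^ 2)) 0 (PI / 2)).
  { rewrite RInt_const. apply Rmult_lt_0_compat; [pose proof PI2_pos; lra|].
    apply sqrt_lt_R0. lra. }
  apply RInt_le.
  - pose proof PI2_pos. lra.
  - apply ex_RInt_const.
  - now apply ex_RInt_sqrt_radicand.
  - intros x _. apply sqrt_le_1_alt.
    assert (sin x ^ 2 <= 1) by (pose proof (SIN_bound x); nra).
    pose proof (pow2_ge_0 q). nra.
Qed.

Lemma EllJ1_ge : PI / 4 <= EllJ1 q.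
Proof.
  rewrite <- RInt_sin_sqr. apply RInt_le.
  - pose proof PI2_pos. lra.
  - apply ex_RInt_sin_sqr.
  - now apply ex_RInt_EllJ1_integrand.
  - intros x _. pose proof (one_le_inv _ (sqrt_radicand_pos q x Hq) (sqrt_radicand_le_1 q x)).
    pose proof (pow2_ge_0 (sin x)). unfold Rdiv. nra.
Qed.

Lemma EllJ3_ge : PI / 4 <= EllJ3 q.
Proof.
  rewrite <- RInt_sin_sqr. apply RInt_le.
  - pose proof PI2_pos. lra.
  - apply ex_RInt_sin_sqr.
  - now apply ex_RInt_EllJ3_integrand.
  - intros x _. pose proof (sqrt_radicand_pos q x Hq). pose proof (sqrt_radicand_le_1 q x).
    pose proof (radicand_pos q x Hq). pose proof (pow2_ge_0 (sin x)).
    assert (1 - q ^ 2 * sin x ^ 2 <= 1) by (pose proof (pow2_ge_0 q); nra).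
    assert (1 <= / (sqrt (1 - q ^ 2 * sin x ^ 2) * (1 - q ^ 2 * sin x ^ 2))).
    { apply one_le_inv; nra. }
    unfold Rdiv. nra.
Qed.

End Bounds.

Definition dEllK (q : R) : R := (EllEc q - (1 - q ^ 2) * EllK q) / (q * (1 - q ^ 2)).
Definition dEllEc (q : R) : R := (EllEc q - EllK q) / q.

Section Derivatives.
Variable q : R.
Hypothesis Hq : 0 < q < 1.

Let Hq2 : q ^ 2 < 1.
Proof. nra. Qed.

Lemma dEllEc_eq : dEllEc q = - q * EllJ1 q.
Proof.
  unfold dEllEc. replace (EllEc q - EllK q) with (- (q ^ 2 * EllJ1 q)).
  - field. lra.
  - rewrite <- EllK_sub_EllEc by exact Hq2. ring.
Qed.

Lemma dEllK_eq : dEllK q = q * EllJ3 q.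
Proof.
  unfold dEllK. replace (EllEc q - (1 - q ^ 2) * EllK q) with (q ^ 2 * ((1 - q ^ 2) * EllJ3 q)).
  - field. lra.
  - rewrite EllJ3_identity, Rmult_minus_distr_l, <- EllK_sub_EllEc by exact Hq2. ring.
Qed.

Lemma is_derive_EllK : is_derive EllK q (dEllK q).
Proof. rewrite dEllK_eq. now apply is_derive_EllK_EllJ3. Qed.

Lemma is_derive_EllEc : is_derive EllEc q (dEllEc q).
Proof. rewrite dEllEc_eq. now apply is_derive_EllEc_EllJ1. Qed.

Lemma dEllK_pos : 0 < dEllK q.
Proof. rewrite dEllK_eq. pose proof (EllJ3_ge q Hq2). pose proof PI_RGT_0. nra. Qed.

Lemma dEllEc_neg : dEllEc q < 0.
Proof. rewrite dEllEc_eq. pose proof (EllJ1_ge q Hq2). pose proof PI_RGT_0. nra. Qed.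

End Derivatives.

(** * The zeros [q*] and [q^], and the shape of [g] *)

Definition h2EK (q : R) : R := 2 * EllEc q - EllK q.

Lemma is_derive_h2EK q : 0 < q < 1 -> is_derive h2EK q (2 * dEllEc q - dEllK q).
Proof.
  intros Hq. apply (is_derive_minus (fun q => 2 * EllEc q) EllK).
  - apply (is_derive_scal EllEc), is_derive_EllEc, Hq.
  - apply is_derive_EllK, Hq.
Qed.

Lemma dh2EK_neg q : 0 < q < 1 -> 2 * dEllEc q - dEllK q < 0.
Proof. intros Hq. pose proof (dEllEc_neg q Hq). pose proof (dEllK_pos q Hq). lra. Qed.

Lemma h2EK_decreasing a b : 0 < a -> a < b -> b < 1 -> h2EK b < h2EK a.
Proof.
  intros Ha Hab Hb. apply (derive_lt0_decreasing h2EK (fun q => 2 * dEllEc q - dEllK q)); auto.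
  - intros x Hx. apply is_derive_h2EK. lra.
  - intros x Hx. apply dh2EK_neg. lra.
Qed.

Lemma continuity_pt_h2EK q : 0 < q < 1 -> continuity_pt h2EK q.
Proof. intros Hq. eapply continuity_pt_of_is_derive, is_derive_h2EK, Hq. Qed.

(* [cos t <= sqrt (1 - q^2 sin^2 t)], so [K] dominates the elementary integral of
   [cos t / (1 - q^2 sin^2 t)]; this is what makes [2E - K] negative near [q = 1]. *)
Lemma EllK_ge_log q : 0 < q < 1 -> (ln (1 + q) - ln (1 - q)) / (2 * q) <= EllK q.
Proof.
  intros Hq. assert (Hq2 : q ^ 2 < 1) by nra.
  assert (Hlog : RInt (fun t => cos t / (1 - q ^ 2 * sin t ^ 2)) 0 (PI / 2)
                 = (ln (1 + q) - ln (1 - q)) / (2 * q) :> R).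
  { rewrite (RInt_antiderivative (fun t => (ln (1 + q * sin t) - ln (1 - q * sin t)) / (2 * q))).
      - rewrite sin_PI2, sin_0, !Rmult_0_r, !Rmult_1_r, Rplus_0_r, Rminus_0_r, ln_1. field. lra.
      - intros x. pose proof (SIN_bound x).
        assert (0 < 1 + q * sin x) by nra. assert (0 < 1 - q * sin x) by nra.
        auto_derive; [repeat split; lra|]. field. repeat split; try lra. nra.
      - intros x. apply (@ex_derive_continuous R_AbsRing R_NormedModule).
        auto_derive. pose proof (radicand_pos q x Hq2). lra. }
  rewrite <- Hlog. apply RInt_le.
  - pose proof PI2_pos. lra.
  - apply ex_RInt_of_ex_derive. intros x. auto_derive. pose proof (radicand_pos q x Hq2). lra.
  - now apply ex_RInt_inv_sqrt_radicand.
  - intros x Hx. pose proof (sqrt_radicand_pos q x Hq2). pose proof (radicand_pos q x Hq2).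
    pose proof (sqrt_radicand_sqr q x Hq2) as Hss.
    set (s := sqrt (1 - q ^ 2 * sin x ^ 2)) in *.
    assert (0 <= cos x) by (apply cos_ge_0; lra).
    assert (cos x <= s).
    { apply Rsqr_incr_0_var; [|lra]. unfold Rsqr. rewrite Hss.
      pose proof (cos_sqr x). pose proof (pow2_ge_0 (sin x)). nra. }
    rewrite <- Hss. apply (Rmult_le_reg_r (s * s)); [nra|].
    field_simplify; lra.
Qed.

Lemma ln_10_gt_2 : 2 < ln 10.
Proof.
  assert (exp 2 < 10).
  { replace 2 with (1 + 1) by ring. rewrite exp_plus. pose proof exp_le_3. pose proof (exp_pos 1). nra. }
  rewrite <- (ln_exp 2). apply ln_increasing; [apply exp_pos|assumption].
Qed.

Lemma h2EK_neg_near_1 : h2EK (9999 / 10000) < 0.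
Proof.
  pose proof (EllK_ge_log (9999 / 10000) ltac:(lra)) as HK.
  replace (1 - 9999 / 10000) with (/ 10 ^ 4) in HK by field.
  rewrite ln_Rinv, ln_pow in HK by (try apply pow_lt; lra).
  assert (0 <= ln (1 + 9999 / 10000)) by (rewrite <- ln_1; apply ln_le; lra).
  pose proof ln_10_gt_2. pose proof (EllEc_le (9999 / 10000) ltac:(lra)). pose proof PI_4.
  assert (4 < EllK (9999 / 10000)).
  { eapply Rlt_le_trans; [|exact HK]. apply Rmult_lt_reg_r with (2 * (9999 / 10000)); [lra|].
    unfold Rdiv. rewrite Rmult_assoc, Rinv_l by lra. simpl INR. lra. }
  unfold h2EK. lra.
Qed.

Lemma inv_sqrt2_sqr : (/ sqrt 2) ^ 2 = / 2.
Proof. rewrite pow_inv. simpl. rewrite Rmult_1_r, sqrt_sqrt; lra. Qed.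

Lemma inv_sqrt2_bounds : 0 < / sqrt 2 < 1.
Proof.
  assert (0 < / sqrt 2) by (apply Rinv_0_lt_compat, sqrt_lt_R0; lra).
  pose proof inv_sqrt2_sqr. split; [assumption|nra].
Qed.

(* At [q = 1/sqrt 2] the integrand of [2E - K] is [cos^2 t / sqrt (1 - sin^2 t / 2)]. *)
Lemma h2EK_inv_sqrt2_pos : 0 < h2EK (/ sqrt 2).
Proof.
  assert (Hr : (/ sqrt 2) ^ 2 < 1) by (rewrite inv_sqrt2_sqr; lra).
  unfold h2EK, EllEc, EllE, EllK, EllF.
  rewrite <- (Rmult_1_l (RInt (fun th => / sqrt _) _ _)), <- RInt_lin_comb
    by auto using ex_RInt_sqrt_radicand, ex_RInt_inv_sqrt_radicand.
  apply Rlt_le_trans with (PI / 4); [pose proof PI_RGT_0; lra|].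
  rewrite <- RInt_cos_sqr. apply RInt_le.
  - pose proof PI2_pos. lra.
  - apply ex_RInt_cos_sqr.
  - apply ex_RInt_of_ex_derive. intros x. auto_derive; radicand_side.
  - intros x _. pose proof (sqrt_radicand_pos _ x Hr) as Hs.
    pose proof (sqrt_radicand_le_1 (/ sqrt 2) x) as Hs1.
    pose proof (sqrt_radicand_sqr _ x Hr) as Hss.
    set (s := sqrt (1 - (/ sqrt 2) ^ 2 * sin x ^ 2)) in *. rewrite inv_sqrt2_sqr in Hss.
    replace (2 * s - 1 * / s) with ((2 * (s * s) - 1) / s) by (field; lra).
    rewrite Hss. replace (2 * (1 - / 2 * sin x ^ 2) - 1) with (cos x ^ 2) by (rewrite cos_sqr; field).
    pose proof (one_le_inv s Hs Hs1). pose proof (pow2_ge_0 (cos x)). unfold Rdiv. nra.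
Qed.

Lemma qstar_exists : exists q, 0 < q < 1 /\ 2 * EllEc q - EllK q = 0.
Proof.
  pose proof inv_sqrt2_bounds. pose proof inv_sqrt2_sqr.
  destruct (IVT_interv (fun q => - h2EK q) (/ sqrt 2) (9999 / 10000)) as [z [Hz Hf]].
  - intros a Ha. apply continuity_pt_opp, continuity_pt_h2EK. lra.
  - nra.
  - pose proof h2EK_inv_sqrt2_pos. lra.
  - pose proof h2EK_neg_near_1. lra.
  - exists z. unfold h2EK in Hf. split; lra.
Qed.

Lemma qstar_spec : / sqrt 2 < qstar < 1 /\ h2EK qstar = 0.
Proof.
  destruct (epsilon_spec (inhabits 0) _ qstar_exists) as [Hq Hh]. fold qstar in Hq, Hh.
  change (h2EK qstar = 0) in Hh.
  pose proof inv_sqrt2_bounds. pose proof h2EK_inv_sqrt2_pos.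
  split; [split|exact Hh]; [|lra].
  destruct (Rtotal_order qstar (/ sqrt 2)) as [Hlt|[Heq|Hgt]]; [|rewrite Heq in Hh|]; try lra.
  pose proof (h2EK_decreasing qstar (/ sqrt 2) (proj1 Hq) Hlt (proj2 H)). lra.
Qed.

Lemma h2EK_pos q : 0 < q < qstar -> 0 < h2EK q.
Proof. intros Hq. destruct qstar_spec as [Hs <-]. apply h2EK_decreasing; lra. Qed.

Lemma h2EK_neg q : qstar < q < 1 -> h2EK q < 0.
Proof.
  intros Hq. destruct qstar_spec as [Hs <-]. pose proof inv_sqrt2_bounds. apply h2EK_decreasing; lra.
Qed.

Lemma sqr_gt_half q : / sqrt 2 < q -> / 2 < q ^ 2.
Proof. intros Hq. pose proof inv_sqrt2_bounds. rewrite <- inv_sqrt2_sqr. nra. Qed.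

Lemma is_derive_ff q : 0 < q < 1 ->
  is_derive ff q (q * ((20 * q ^ 2 - 13) * EllK q - 20 * (2 * q ^ 2 - 1) * EllEc q)).
Proof.
  intros Hq. unfold ff. eapply is_derive_eq.
  - apply (is_derive_plus (fun q => (4 * q ^ 4 - 5 * q ^ 2 + 1) * EllK q)
                          (fun q => (- 8 * q ^ 4 + 8 * q ^ 2 - 1) * EllEc q)).
    + apply (is_derive_mult (fun q => 4 * q ^ 4 - 5 * q ^ 2 + 1) EllK);
        [auto_derive; auto|apply is_derive_EllK, Hq|intros; apply Rmult_comm].
    + apply (is_derive_mult (fun q => - 8 * q ^ 4 + 8 * q ^ 2 - 1) EllEc);
        [auto_derive; auto|apply is_derive_EllEc, Hq|intros; apply Rmult_comm].
  - unfold dEllK, dEllEc, plus, mult; simpl. field. split; nra.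
Qed.

Lemma ff_inv_sqrt2_pos : 0 < ff (/ sqrt 2).
Proof.
  pose proof h2EK_inv_sqrt2_pos. unfold ff, h2EK in *.
  replace ((/ sqrt 2) ^ 4) with (((/ sqrt 2) ^ 2) ^ 2) by ring. rewrite inv_sqrt2_sqr. lra.
Qed.

(* [f = (4q^4 - 5q^2 + 1) (K - 2E) + (1 - 2q^2) E], and for [1/2 < q^2 < 1] both terms
   are negative when [K >= 2E]. *)
Lemma ff_neg_of_h2EK_nonpos q : / sqrt 2 < q < 1 -> h2EK q <= 0 -> ff q < 0.
Proof.
  intros Hq Hh. pose proof inv_sqrt2_bounds. pose proof (sqr_gt_half q (proj1 Hq)).
  pose proof (EllEc_pos q ltac:(nra)). unfold ff, h2EK in *.
  replace (q ^ 4) with ((q ^ 2) ^ 2) by ring. set (x := q ^ 2) in *.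
  assert (x < 1) by (unfold x; nra).
  assert (4 * x ^ 2 - 5 * x + 1 < 0) by nra.
  assert ((4 * x ^ 2 - 5 * x + 1) * (EllK q - 2 * EllEc q) <= 0) by nra.
  assert ((1 - 2 * x) * EllEc q < 0) by nra.
  nra.
Qed.

Lemma dff_neg q : / sqrt 2 < q < qstar ->
  (20 * q ^ 2 - 13) * EllK q - 20 * (2 * q ^ 2 - 1) * EllEc q < 0.
Proof.
  intros Hq. pose proof inv_sqrt2_bounds. destruct qstar_spec as [Hs _].
  pose proof (h2EK_pos q ltac:(lra)). pose proof (sqr_gt_half q (proj1 Hq)).
  pose proof (EllEc_pos q ltac:(nra)). pose proof (EllK_ge q ltac:(nra)). pose proof PI_RGT_0.
  unfold h2EK in *.
  destruct (Rle_or_lt (20 * q ^ 2 - 13) 0); nra.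
Qed.

Lemma ff_decreasing a b : / sqrt 2 <= a -> a < b -> b <= qstar -> ff b < ff a.
Proof.
  intros Ha Hab Hb. pose proof inv_sqrt2_bounds. destruct qstar_spec as [Hs _].
  apply (derive_lt0_decreasing ff
    (fun q => q * ((20 * q ^ 2 - 13) * EllK q - 20 * (2 * q ^ 2 - 1) * EllEc q))); auto.
  - intros x Hx. apply is_derive_ff. lra.
  - intros x Hx. pose proof (dff_neg x ltac:(lra)). nra.
Qed.

Lemma qhat_exists : exists q, / sqrt 2 <= q < 1 /\ ff q = 0.
Proof.
  pose proof inv_sqrt2_bounds. destruct qstar_spec as [Hs Hh].
  destruct (IVT_interv (fun q => - ff q) (/ sqrt 2) qstar) as [z [Hz Hf]].
  - intros a Ha. apply continuity_pt_opp. eapply continuity_pt_of_is_derive, is_derive_ff. lra.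
  - lra.
  - pose proof ff_inv_sqrt2_pos. lra.
  - pose proof (ff_neg_of_h2EK_nonpos qstar Hs ltac:(lra)). lra.
  - exists z. split; lra.
Qed.

Lemma qhat_spec : / sqrt 2 < qhat < qstar /\ ff qhat = 0.
Proof.
  destruct (epsilon_spec (inhabits 0) _ qhat_exists) as [Hq Hf]. fold qhat in Hq, Hf.
  pose proof ff_inv_sqrt2_pos. destruct qstar_spec as [Hs Hh].
  split; [split|exact Hf].
  - destruct (proj1 Hq) as [|Heq]; [assumption|]. rewrite <- Heq in Hf. lra.
  - destruct (Rlt_or_le qhat qstar) as [|Hge]; [assumption|].
    assert (Hhat : h2EK qhat <= 0).
    { destruct Hge as [Hgt|<-]; [apply Rlt_le, h2EK_neg|]; lra. }
    pose proof (ff_neg_of_h2EK_nonpos qhat ltac:(lra) Hhat). lra.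
Qed.

Lemma ff_pos q : / sqrt 2 <= q < qhat -> 0 < ff q.
Proof. intros Hq. destruct qhat_spec as [Hs <-]. apply ff_decreasing; lra. Qed.

Lemma ff_neg q : qhat < q < 1 -> ff q < 0.
Proof.
  intros Hq. destruct qhat_spec as [Hs Hf]. destruct (Rle_or_lt q qstar).
  - rewrite <- Hf. apply ff_decreasing; lra.
  - apply ff_neg_of_h2EK_nonpos; [lra|]. apply Rlt_le, h2EK_neg. lra.
Qed.

Lemma is_derive_gg q : 0 < q < 1 -> is_derive gg q (16 * h2EK q * ff q / (q * (1 - q ^ 2))).
Proof.
  intros Hq. apply (is_derive_ext (fun t => 8 * h2EK t ^ 2 * (2 * t ^ 2 - 1))); [reflexivity|].
  eapply is_derive_eq.
  - apply (is_derive_mult (fun t => 8 * h2EK t ^ 2) (fun t => 2 * t ^ 2 - 1));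
      [|auto_derive; auto|intros; apply Rmult_comm].
    apply (is_derive_scal (fun t => h2EK t ^ 2)), (is_derive_pow h2EK), is_derive_h2EK, Hq.
  - unfold h2EK, ff, dEllK, dEllEc, plus, mult, scal; simpl. unfold mult; simpl. field. split; nra.
Qed.

Lemma gg_increasing a b : / sqrt 2 <= a -> a < b -> b <= qhat -> gg a < gg b.
Proof.
  intros Ha Hab Hb. pose proof inv_sqrt2_bounds. destruct qhat_spec as [Hh _]. destruct qstar_spec as [Hs _].
  apply (derive_gt0_increasing gg (fun q => 16 * h2EK q * ff q / (q * (1 - q ^ 2)))); auto.
  - intros x Hx. apply is_derive_gg. lra.
  - intros x Hx. pose proof (h2EK_pos x ltac:(lra)). pose proof (ff_pos x ltac:(lra)).
    apply Rdiv_lt_0_compat; nra.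
Qed.

Lemma gg_decreasing a b : qhat <= a -> a < b -> b <= qstar -> gg b < gg a.
Proof.
  intros Ha Hab Hb. pose proof inv_sqrt2_bounds. destruct qhat_spec as [Hh _]. destruct qstar_spec as [Hs _].
  apply (derive_lt0_decreasing gg (fun q => 16 * h2EK q * ff q / (q * (1 - q ^ 2)))); auto.
  - intros x Hx. apply is_derive_gg. lra.
  - intros x Hx. pose proof (h2EK_pos x ltac:(lra)). pose proof (ff_neg x ltac:(lra)).
    unfold Rdiv. assert (0 < / (x * (1 - x ^ 2))) by (apply Rinv_0_lt_compat; nra).
    assert (h2EK x * ff x < 0) by nra. nra.
Qed.

Lemma gg_inv_sqrt2 : gg (/ sqrt 2) = 0.
Proof. unfold gg. rewrite inv_sqrt2_sqr. field. Qed.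

Lemma gg_qstar : gg qstar = 0.
Proof. destruct qstar_spec as [_ Hh]. unfold gg. unfold h2EK in Hh. rewrite Hh. ring. Qed.

Lemma lamhat_pos : 0 < lamhat.
Proof. rewrite <- gg_inv_sqrt2. destruct qhat_spec as [Hh _]. apply gg_increasing; lra. Qed.

Lemma continuity_pt_gg q : 0 < q < 1 -> continuity_pt gg q.
Proof. intros Hq. eapply continuity_pt_of_is_derive, is_derive_gg, Hq. Qed.

Lemma q1_exists c : 0 < c <= lamhat -> exists q, / sqrt 2 < q <= qhat /\ gg q = c.
Proof.
  intros Hc. pose proof inv_sqrt2_bounds. destruct qhat_spec as [Hh _]. destruct qstar_spec as [Hs _].
  destruct (Req_dec c lamhat) as [->|Hne]; [exists qhat; split; [lra|reflexivity]|].
  destruct (IVT_interv (fun q => gg q - c) (/ sqrt 2) qhat) as [z [Hz Hf]].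
  - intros a Ha. apply continuity_pt_minus; [apply continuity_pt_gg; lra|].
    apply continuity_pt_const. now intros ? ?.
  - lra.
  - rewrite gg_inv_sqrt2. lra.
  - unfold lamhat in *. lra.
  - exists z. destruct (Req_dec z (/ sqrt 2)) as [->|]; [rewrite gg_inv_sqrt2 in Hf|]; split; lra.
Qed.

Lemma q2_exists c : 0 < c <= lamhat -> exists q, qhat <= q < qstar /\ gg q = c.
Proof.
  intros Hc. pose proof inv_sqrt2_bounds. destruct qhat_spec as [Hh _]. destruct qstar_spec as [Hs _].
  destruct (Req_dec c lamhat) as [->|Hne]; [exists qhat; split; [lra|reflexivity]|].
  destruct (IVT_interv (fun q => c - gg q) qhat qstar) as [z [Hz Hf]].
  - intros a Ha. apply continuity_pt_minus; [|apply continuity_pt_gg; lra].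
    apply continuity_pt_const. now intros ? ?.
  - lra.
  - unfold lamhat in *. lra.
  - rewrite gg_qstar. lra.
  - exists z. destruct (Req_dec z qstar) as [->|]; [rewrite gg_qstar in Hf|]; split; lra.
Qed.

Lemma q1_spec c : 0 < c <= lamhat -> / sqrt 2 < q1 c <= qhat /\ gg (q1 c) = c.
Proof. intros Hc. exact (epsilon_spec (inhabits 0) _ (q1_exists c Hc)). Qed.

Lemma q2_spec c : 0 < c <= lamhat -> qhat <= q2 c < qstar /\ gg (q2 c) = c.
Proof. intros Hc. exact (epsilon_spec (inhabits 0) _ (q2_exists c Hc)). Qed.

Lemma gg_gt_between c q : 0 < c <= lamhat -> q1 c < q < q2 c -> c < gg q.
Proof.
  intros Hc Hq. destruct (q1_spec c Hc) as [H1 E1]. destruct (q2_spec c Hc) as [H2 E2].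
  destruct (Rle_or_lt q qhat).
  - rewrite <- E1. apply gg_increasing; lra.
  - rewrite <- E2. apply gg_decreasing; lra.
Qed.

(** * The amplitude *)

Section Amplitude.
Variable q : R.
Hypothesis Hq : q ^ 2 < 1.

Lemma is_derive_EllF_upper x : is_derive (fun y => EllF y q) x (/ sqrt (1 - q ^ 2 * sin x ^ 2)).
Proof.
  apply (is_derive_RInt_upper (fun t => / sqrt (1 - q ^ 2 * sin t ^ 2))).
  - intros. now apply ex_RInt_inv_sqrt_radicand.
  - now apply continuous_inv_sqrt_radicand.
Qed.

Lemma is_derive_EllE_upper x : is_derive (fun y => EllE y q) x (sqrt (1 - q ^ 2 * sin x ^ 2)).
Proof.
  apply (is_derive_RInt_upper (fun t => sqrt (1 - q ^ 2 * sin t ^ 2))).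
  - intros. now apply ex_RInt_sqrt_radicand.
  - now apply continuous_sqrt_radicand.
Qed.

Lemma EllF_0 : EllF 0 q = 0.
Proof. unfold EllF. now rewrite RInt_point. Qed.

Lemma EllF_increasing x y : x < y -> EllF x q < EllF y q.
Proof.
  intros Hxy.
  apply (derive_gt0_increasing (fun y => EllF y q) (fun x => / sqrt (1 - q ^ 2 * sin x ^ 2))); auto.
  - intros t _. apply is_derive_EllF_upper.
  - intros t _. now apply Rinv_0_lt_compat, sqrt_radicand_pos.
Qed.

Lemma EllF_sub_id_nondecreasing x y : x <= y -> EllF x q - x <= EllF y q - y.
Proof.
  intros Hxy. apply (derive_ge0_nondecreasing (fun y => EllF y q - y)
                       (fun x => / sqrt (1 - q ^ 2 * sin x ^ 2) - 1)); auto.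
  - intros t _. apply (is_derive_minus (fun y => EllF y q) (fun y => y)).
    + apply is_derive_EllF_upper.
    + apply (@is_derive_id R_AbsRing).
  - intros t _. pose proof (one_le_inv _ (sqrt_radicand_pos q t Hq) (sqrt_radicand_le_1 q t)). lra.
Qed.

Lemma EllF_surjective u : exists x, EllF x q = u.
Proof.
  pose proof (Rabs_pos u). pose proof (Rle_abs u). pose proof (Rle_abs (- u)). rewrite Rabs_Ropp in *.
  pose proof (EllF_sub_id_nondecreasing (- Rabs u - 1) 0 ltac:(lra)).
  pose proof (EllF_sub_id_nondecreasing 0 (Rabs u + 1) ltac:(lra)). rewrite EllF_0 in *.
  destruct (IVT_interv (fun x => EllF x q - u) (- Rabs u - 1) (Rabs u + 1)) as [z [_ Hz]]; try lra.
  - intros a _. apply continuity_pt_minus; [eapply continuity_pt_of_is_derive, is_derive_EllF_upper|].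
    apply continuity_pt_const. now intros ? ?.
  - exists z. lra.
Qed.

Lemma EllF_am u : EllF (am u q) q = u.
Proof. exact (epsilon_spec (inhabits 0) _ (EllF_surjective u)). Qed.

Lemma EllF_injective x y : EllF x q = EllF y q -> x = y.
Proof.
  intros Hxy. destruct (Rtotal_order x y) as [Hlt|[Heq|Hgt]]; auto.
  - pose proof (EllF_increasing x y Hlt). lra.
  - pose proof (EllF_increasing y x Hgt). lra.
Qed.

Lemma am_EllF x : am (EllF x q) q = x.
Proof. apply EllF_injective, EllF_am. Qed.

Lemma am_increasing u v : u < v -> am u q < am v q.
Proof.
  intros Huv. destruct (Rlt_or_le (am u q) (am v q)) as [|Hle]; [assumption|].
  destruct Hle as [Hlt|Heq].
  - pose proof (EllF_increasing _ _ Hlt) as Hvu. rewrite !EllF_am in Hvu. lra.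
  - apply (f_equal (fun x => EllF x q)) in Heq. rewrite !EllF_am in Heq. lra.
Qed.

Lemma continuity_pt_am u : continuity_pt (fun v => am v q) u.
Proof.
  apply (continuity_pt_recip_prelim (fun y => EllF y q) (fun v => am v q) (am u q - 1) (am u q + 1)).
  - lra.
  - intros; now apply EllF_increasing.
  - intros x _. apply am_EllF.
  - intros a _. eapply continuity_pt_of_is_derive, is_derive_EllF_upper.
  - rewrite <- (EllF_am u) at 2 3. split; apply EllF_increasing; lra.
Qed.

Lemma is_derive_am u : is_derive (fun v => am v q) u (sqrt (1 - q ^ 2 * sin (am u q) ^ 2)).
Proof.
  pose (derivable_EllF := fun a => exist (fun l => derivable_pt_lim (fun y => EllF y q) a l) _
                                     (proj1 (is_derive_Reals _ _ _) (is_derive_EllF_upper a))).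
  assert (Hbounds : am (u - 1) q <= am u q <= am (u + 1) q) by (split; apply Rlt_le, am_increasing; lra).
  assert (Hinv : forall x, u - 1 <= x <= u + 1 -> comp (fun y => EllF y q) (fun v => am v q) x = id x).
  { intros x _. apply EllF_am. }
  assert (Hnz : / sqrt (1 - q ^ 2 * sin (am u q) ^ 2) <> 0).
  { apply Rinv_neq_0_compat, Rgt_not_eq, sqrt_radicand_pos, Hq. }
  pose proof (derivable_pt_lim_recip_interv (fun y => EllF y q) (fun v => am v q) (u - 1) (u + 1) u
                (fun a _ => derivable_EllF a) (continuity_pt_am u) ltac:(lra) ltac:(lra) Hbounds Hinv Hnz)
    as Hder.
  apply is_derive_Reals.
  replace (sqrt (1 - q ^ 2 * sin (am u q) ^ 2)) with (1 / / sqrt (1 - q ^ 2 * sin (am u q) ^ 2)).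
  - exact Hder.
  - field. apply Rgt_not_eq, sqrt_radicand_pos, Hq.
Qed.

End Amplitude.

(** * The arc curves *)

Section PeriodicEven.
Variable phi : R -> R.
Hypothesis phi_cont : forall x, continuous phi x.
Hypothesis phi_periodic : forall x, phi (x + PI) = phi x.
Hypothesis phi_even : forall x, phi (- x) = phi x.

Let phi_int a b : ex_RInt phi a b.
Proof. apply (@ex_RInt_continuous R_CompleteNormedModule). intros; apply phi_cont. Qed.

Lemma RInt_periodic_shift x : RInt phi 0 (x + PI) = RInt phi 0 x + RInt phi 0 PI.
Proof.
  rewrite <- (RInt_Chasles phi 0 PI (x + PI)) by apply phi_int.
  assert (Hshift : RInt phi PI (x + PI) = RInt phi 0 x).
  { replace PI with (1 * 0 + PI) at 1 by ring. replace (x + PI) with (1 * x + PI) by ring.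
    rewrite <- RInt_comp_lin by apply phi_int.
    apply RInt_ext. intros y _. now rewrite !Rmult_1_l, phi_periodic. }
  rewrite Hshift. apply Rplus_comm.
Qed.

Lemma RInt_even_opp x : RInt phi 0 (- x) = - RInt phi 0 x :> R.
Proof.
  replace 0 with (-1 * 0 + 0) at 1 by ring. replace (- x) with (-1 * x + 0) by ring.
  rewrite <- RInt_comp_lin by apply phi_int.
  rewrite (RInt_ext_R _ (fun y => -1 * phi y)).
  - rewrite RInt_scal_R by apply phi_int. ring.
  - intros y. replace (-1 * y + 0) with (- y) by ring. now rewrite phi_even.
Qed.

Lemma RInt_periodic_PI : RInt phi 0 PI = 2 * RInt phi 0 (PI / 2) :> R.
Proof.
  pose proof (RInt_periodic_shift (- (PI / 2))) as Hshift.
  replace (- (PI / 2) + PI) with (PI / 2) in Hshift by field.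
  rewrite RInt_even_opp in Hshift. lra.
Qed.

Lemma RInt_half_odd_multiple_PI n :
  RInt phi 0 (- (PI / 2) + INR n * PI) = (2 * INR n - 1) * RInt phi 0 (PI / 2) :> R.
Proof.
  induction n as [|n IH].
  - rewrite Rmult_0_l, Rplus_0_r, RInt_even_opp. simpl. ring.
  - rewrite S_INR. replace (- (PI / 2) + (INR n + 1) * PI) with ((- (PI / 2) + INR n * PI) + PI) by ring.
    rewrite RInt_periodic_shift, IH, RInt_periodic_PI. ring.
Qed.

End PeriodicEven.

Lemma sin_sqr_periodic x : sin (x + PI) ^ 2 = sin x ^ 2.
Proof. rewrite neg_sin. ring. Qed.

Lemma sin_sqr_even x : sin (- x) ^ 2 = sin x ^ 2.
Proof. rewrite sin_neg. ring. Qed.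

Lemma EllF_half_odd_multiple_PI q n : q ^ 2 < 1 ->
  EllF (- (PI / 2) + INR n * PI) q = (2 * INR n - 1) * EllK q.
Proof.
  intros Hq. apply RInt_half_odd_multiple_PI.
  - now apply continuous_inv_sqrt_radicand.
  - intros x. now rewrite sin_sqr_periodic.
  - intros x. now rewrite sin_sqr_even.
Qed.

Lemma EllE_half_odd_multiple_PI q n : q ^ 2 < 1 ->
  EllE (- (PI / 2) + INR n * PI) q = (2 * INR n - 1) * EllEc q.
Proof.
  intros Hq. apply RInt_half_odd_multiple_PI.
  - now apply continuous_sqrt_radicand.
  - intros x. now rewrite sin_sqr_periodic.
  - intros x. now rewrite sin_sqr_even.
Qed.

Section ArcCurve.
Variables (l : R) (n : nat) (q : R).
Hypothesis Hq : 0 < q < 1.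
Hypothesis Halpha : alpha_of l n q <> 0.

Let a := alpha_of l n q.
Let phase s := am (a * s - EllK q) q.
Let Hq2 : q ^ 2 < 1.
Proof. nra. Qed.

Let sqr_sqrt_radicand x : sqrt (1 - q ^ 2 * sin x ^ 2) ^ 2 = 1 - q ^ 2 * sin x ^ 2.
Proof. apply pow2_sqrt, Rlt_le, radicand_pos, Hq2. Qed.

Lemma is_derive_phase s : is_derive phase s (a * sqrt (1 - q ^ 2 * sin (phase s) ^ 2)).
Proof.
  eapply is_derive_eq.
  - apply (is_derive_chain (fun v => am v q) (fun s => a * s - EllK q)); [now apply is_derive_am|].
    auto_derive; auto.
  - unfold phase. ring.
Qed.

Lemma is_derive_xc s : is_derive (xc (gamma_q l n q)) s (1 - 2 * q ^ 2 * sin (phase s) ^ 2).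
Proof.
  change (xc (gamma_q l n q)) with (fun s => / a * (2 * EllE (phase s) q + 2 * EllEc q - a * s)).
  eapply is_derive_eq.
  - apply (is_derive_scal (fun s => 2 * EllE (phase s) q + 2 * EllEc q - a * s)).
    apply (is_derive_minus (fun s => 2 * EllE (phase s) q + 2 * EllEc q) (fun s => a * s)).
    + apply (is_derive_plus (fun s => 2 * EllE (phase s) q) (fun _ => 2 * EllEc q));
        [|apply (@is_derive_const R_AbsRing)].
      apply (is_derive_scal (fun s => EllE (phase s) q)).
      apply (is_derive_chain (fun v => EllE v q) phase);
        [now apply is_derive_EllE_upper|apply is_derive_phase].
    + apply (is_derive_scal (fun s => s)), (@is_derive_id R_AbsRing).
  - change zero with 0. change one with 1.
    change (minus ?u ?v) with (u - v). change (plus ?u ?v) with (u + v).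
    transitivity (/ a * (a * (2 * sqrt (1 - q ^ 2 * sin (phase s) ^ 2) ^ 2 - 1))); [ring|].
    rewrite sqr_sqrt_radicand. field. exact Halpha.
Qed.

Lemma is_derive_yc s :
  is_derive (yc (gamma_q l n q)) s (- 2 * q * sin (phase s) * sqrt (1 - q ^ 2 * sin (phase s) ^ 2)).
Proof.
  change (yc (gamma_q l n q)) with (fun s => / a * (2 * q * cos (phase s))).
  eapply is_derive_eq.
  - apply (is_derive_scal (fun s => 2 * q * cos (phase s))), (is_derive_scal (fun s => cos (phase s))).
    apply (is_derive_chain cos phase); [apply is_derive_cos|apply is_derive_phase].
  - field. exact Halpha.
Qed.

Let tangent_x s := 1 - 2 * q ^ 2 * sin (phase s) ^ 2.
Let tangent_y s := - 2 * q * sin (phase s) * sqrt (1 - q ^ 2 * sin (phase s) ^ 2).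

Lemma Derive_xc : Derive (xc (gamma_q l n q)) = tangent_x.
Proof. apply functional_extensionality. intros s. apply is_derive_unique, is_derive_xc. Qed.

Lemma Derive_yc : Derive (yc (gamma_q l n q)) = tangent_y.
Proof. apply functional_extensionality. intros s. apply is_derive_unique, is_derive_yc. Qed.

Lemma is_derive_tangent_x s :
  is_derive tangent_x s
    (- 4 * q ^ 2 * a * sin (phase s) * cos (phase s) * sqrt (1 - q ^ 2 * sin (phase s) ^ 2)).
Proof.
  eapply is_derive_eq.
  - apply (is_derive_chain (fun x => 1 - 2 * q ^ 2 * sin x ^ 2) phase); [|apply is_derive_phase].
    auto_derive; auto.
  - simpl. ring.
Qed.

Lemma is_derive_tangent_y s :
  is_derive tangent_y s (- 2 * q * a * cos (phase s) * (1 - 2 * q ^ 2 * sin (phase s) ^ 2)).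
Proof.
  pose proof (sqrt_radicand_pos q (phase s) Hq2) as Hr.
  eapply is_derive_eq.
  - apply (is_derive_chain (fun x => - 2 * q * sin x * sqrt (1 - q ^ 2 * sin x ^ 2)) phase);
      [|apply is_derive_phase].
    auto_derive; [radicand_side|reflexivity].
  - radicand_facts. pose proof (sqr_sqrt_radicand (phase s)) as Hr2.
    set (r := sqrt (1 - q ^ 2 * sin (phase s) ^ 2)) in *.
    field_simplify; [|lra]. rewrite Hr2. field.
Qed.

Lemma speed_gamma_q s : speed (gamma_q l n q) s = 1.
Proof.
  unfold speed. rewrite Derive_xc, Derive_yc. unfold tangent_x, tangent_y.
  transitivity (sqrt 1); [f_equal|apply sqrt_1].
  replace ((- 2 * q * sin (phase s) * sqrt (1 - q ^ 2 * sin (phase s) ^ 2)) ^ 2)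
    with (4 * q ^ 2 * sin (phase s) ^ 2 * sqrt (1 - q ^ 2 * sin (phase s) ^ 2) ^ 2) by ring.
  rewrite sqr_sqrt_radicand. ring.
Qed.

Lemma curv_gamma_q s : curv (gamma_q l n q) s = - 2 * q * a * cos (phase s).
Proof.
  unfold curv. rewrite speed_gamma_q, Derive_xc, Derive_yc.
  rewrite (is_derive_unique _ _ _ (is_derive_tangent_x s)), (is_derive_unique _ _ _ (is_derive_tangent_y s)).
  unfold tangent_x, tangent_y.
  replace (- 2 * q * sin (phase s) * sqrt (1 - q ^ 2 * sin (phase s) ^ 2) *
    (- 4 * q ^ 2 * a * sin (phase s) * cos (phase s) * sqrt (1 - q ^ 2 * sin (phase s) ^ 2)))
    with (8 * q ^ 3 * a * sin (phase s) ^ 2 * cos (phase s) * sqrt (1 - q ^ 2 * sin (phase s) ^ 2) ^ 2)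
    by ring.
  rewrite sqr_sqrt_radicand. field.
Qed.

Lemma phase_at_multiple (m : nat) : phase (2 * INR m * EllK q / a) = - (PI / 2) + INR m * PI.
Proof.
  unfold phase. replace (a * (2 * INR m * EllK q / a) - EllK q) with ((2 * INR m - 1) * EllK q)
    by (field; exact Halpha).
  rewrite <- EllF_half_odd_multiple_PI by exact Hq2. now apply am_EllF.
Qed.

Lemma Energy_gamma_q lam : Energy lam (gamma_q l n q) (length_q l n q) =
  8 * INR n * a * (EllEc q - (1 - q ^ 2) * EllK q) + lam * (2 * INR n * EllK q / a).
Proof.
  unfold Energy, length_q. fold a.
  rewrite (RInt_ext_R _ (fun s => 4 * q ^ 2 * a ^ 2 * cos (phase s) ^ 2))
    by (intros s; rewrite curv_gamma_q, speed_gamma_q; ring).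
  rewrite (RInt_ext_R (speed (gamma_q l n q)) (fun _ => 1)), RInt_one by apply speed_gamma_q.
  rewrite (RInt_antiderivative (fun s => 4 * a * EllE (phase s) q - 4 * a ^ 2 * (1 - q ^ 2) * s)).
  - assert (Hphase0 : phase 0 = - (PI / 2) + INR 0 * PI).
    { rewrite <- (phase_at_multiple 0). f_equal. simpl. field. exact Halpha. }
    rewrite Hphase0, phase_at_multiple, !EllE_half_odd_multiple_PI by exact Hq2. simpl INR.
    field. exact Halpha.
  - intros s. eapply is_derive_eq.
    + apply (is_derive_minus (fun s => 4 * a * EllE (phase s) q) (fun s => 4 * a ^ 2 * (1 - q ^ 2) * s)).
      * apply (is_derive_scal (fun s => EllE (phase s) q)).
        apply (is_derive_chain (fun v => EllE v q) phase);
        [now apply is_derive_EllE_upper|apply is_derive_phase].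
      * apply (is_derive_scal (fun s => s)), (@is_derive_id R_AbsRing).
    + change one with 1. change (minus ?u ?v) with (u - v).
      transitivity (4 * a ^ 2 * (sqrt (1 - q ^ 2 * sin (phase s) ^ 2) ^ 2 - 1 + q ^ 2)); [ring|].
      rewrite sqr_sqrt_radicand, cos_sqr. ring.
  - intros s. apply (@ex_derive_continuous R_AbsRing R_NormedModule).
    eexists. apply (is_derive_scal (fun s => cos (phase s) ^ 2)).
    apply (is_derive_chain (fun x => cos x ^ 2) phase); [auto_derive; auto|apply is_derive_phase].
Qed.

End ArcCurve.

(** * Comparison of the energies *)

Definition reduced_energy (c q : R) : R :=
  16 * h2EK q * (EllEc q - (1 - q ^ 2) * EllK q) + c * (EllK q / h2EK q).

Lemma Energy_gamma_q_reduced lam l n q : 0 < l -> (0 < n)%nat -> 0 < q < 1 -> 0 < h2EK q ->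
  Energy lam (gamma_q l n q) (length_q l n q) = INR n ^ 2 / l * reduced_energy (lam * l ^ 2 / INR n ^ 2) q.
Proof.
  intros Hl Hn Hq Hh. assert (HN : 0 < INR n) by (apply lt_0_INR; lia).
  assert (Halpha : alpha_of l n q = 2 * INR n / l * h2EK q) by reflexivity.
  rewrite Energy_gamma_q by (auto; rewrite Halpha; apply Rgt_not_eq, Rmult_lt_0_compat; auto;
                             apply Rdiv_lt_0_compat; lra).
  rewrite Halpha. unfold reduced_energy. field. lra.
Qed.

Definition dEllK_over_h2EK (q : R) : R :=
  (dEllK q * h2EK q - EllK q * (2 * dEllEc q - dEllK q)) / h2EK q ^ 2.

Lemma dEllK_over_h2EK_pos q : 0 < q < 1 -> 0 < h2EK q -> 0 < dEllK_over_h2EK q.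
Proof.
  intros Hq Hh. pose proof (dEllK_pos q Hq). pose proof (dh2EK_neg q Hq).
  pose proof (EllK_ge q ltac:(nra)). pose proof PI_RGT_0.
  apply Rdiv_lt_0_compat; [nra|apply pow_lt, Hh].
Qed.

(* The [c]-free part of [reduced_energy] has derivative [- g (K / h)']. *)
Lemma is_derive_reduced_energy c q : 0 < q < 1 -> 0 < h2EK q ->
  is_derive (reduced_energy c) q ((c - gg q) * dEllK_over_h2EK q).
Proof.
  intros Hq Hh. unfold reduced_energy. eapply is_derive_eq.
  - apply (is_derive_plus (fun q => 16 * h2EK q * (EllEc q - (1 - q ^ 2) * EllK q))
                          (fun q => c * (EllK q / h2EK q))).
    + apply (is_derive_mult (fun q => 16 * h2EK q) (fun q => EllEc q - (1 - q ^ 2) * EllK q));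
        [| |intros; apply Rmult_comm].
      * apply (is_derive_scal h2EK), is_derive_h2EK, Hq.
      * apply (is_derive_minus EllEc (fun q => (1 - q ^ 2) * EllK q)); [now apply is_derive_EllEc|].
        apply (is_derive_mult (fun q => 1 - q ^ 2) EllK); [auto_derive; auto|now apply is_derive_EllK|].
        intros; apply Rmult_comm.
    + apply (is_derive_scal (fun q => EllK q / h2EK q)).
      apply is_derive_div; [now apply is_derive_EllK|now apply is_derive_h2EK|lra].
  - unfold dEllK_over_h2EK, gg, h2EK, dEllK, dEllEc in *. unfold plus, mult, scal, minus, opp; simpl.
    unfold mult, plus; simpl. field. repeat split; nra.
Qed.

Lemma reduced_energy_q2_le_q1 c : 0 < c <= lamhat ->
  reduced_energy c (q2 c) <= reduced_energy c (q1 c) /\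
  (reduced_energy c (q2 c) = reduced_energy c (q1 c) -> q1 c = q2 c).
Proof.
  intros Hc. destruct (q1_spec c Hc) as [H1 _]. destruct (q2_spec c Hc) as [H2 _].
  pose proof inv_sqrt2_bounds. destruct qstar_spec as [Hs _].
  assert (Hdec : q1 c < q2 c -> reduced_energy c (q2 c) < reduced_energy c (q1 c)).
  { intros Hlt. apply (derive_lt0_decreasing (reduced_energy c)
                         (fun q => (c - gg q) * dEllK_over_h2EK q)); [exact Hlt| |].
    - intros x Hx. apply is_derive_reduced_energy; [lra|apply h2EK_pos; lra].
    - intros x Hx. pose proof (gg_gt_between c x Hc Hx).
      pose proof (dEllK_over_h2EK_pos x ltac:(lra) (h2EK_pos x ltac:(lra))). nra. }
  destruct (Rle_lt_or_eq_dec (q1 c) (q2 c)) as [Hlt|Heq]; [lra| |].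
  - pose proof (Hdec Hlt). split; [lra|intros; lra].
  - rewrite Heq. split; [lra|reflexivity].
Qed.

Lemma q1_eq_q2_iff c : 0 < c <= lamhat -> q1 c = q2 c <-> c = lamhat.
Proof.
  intros Hc. destruct (q1_spec c Hc) as [H1 E1]. destruct (q2_spec c Hc) as [H2 E2].
  destruct qhat_spec as [Hh _]. split.
  - intros Heq. unfold lamhat. replace qhat with (q1 c) by lra. now symmetry.
  - intros ->. assert (Ehat : gg qhat = lamhat) by reflexivity.
    assert (q1 lamhat = qhat).
    { destruct (proj2 H1) as [Hlt|]; [|assumption].
      pose proof (gg_increasing (q1 lamhat) qhat ltac:(lra) Hlt ltac:(lra)). lra. }
    assert (q2 lamhat = qhat).
    { destruct (proj1 H2) as [Hlt|]; [|auto].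
      pose proof (gg_decreasing qhat (q2 lamhat) ltac:(lra) Hlt ltac:(lra)). lra. }
    congruence.
Qed.

Lemma ceilZ_spec x : IZR (ceilZ x) - 1 < x <= IZR (ceilZ x).
Proof.
  unfold ceilZ. destruct (archimed x) as [H1 H2].
  destruct (Req_EM_T (IZR (up x) - 1) x) as [E|E].
  - rewrite minus_IZR. lra.
  - lra.
Qed.

Lemma ceilZ_IZR k : ceilZ (IZR k) = k.
Proof.
  destruct (ceilZ_spec (IZR k)) as [Hlo Hhi].
  assert (Hlt : IZR (ceilZ (IZR k)) < IZR (k + 1)) by (rewrite plus_IZR; lra).
  apply lt_IZR in Hlt. apply le_IZR in Hhi. lia.
Qed.

Lemma nlam_sqr lam l (m : nat) : lam * l ^ 2 = INR m ^ 2 * lamhat -> nlam lam l = m.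
Proof.
  intros Hm. pose proof lamhat_pos. unfold nlam. rewrite Hm.
  replace (INR m ^ 2 * lamhat / lamhat) with (INR m ^ 2) by (field; lra).
  rewrite sqrt_pow2, INR_IZR_INZ, ceilZ_IZR by apply pos_INR. apply Nat2Z.id.
Qed.

Lemma sqrt_le_nlam lam l : 0 < lam -> 0 < l ->
  (1 <= nlam lam l)%nat /\ sqrt (lam * l ^ 2 / lamhat) <= INR (nlam lam l).
Proof.
  intros Hlam Hl. pose proof lamhat_pos. unfold nlam.
  set (x := sqrt (lam * l ^ 2 / lamhat)).
  assert (Hx : 0 < x).
  { apply sqrt_lt_R0, Rdiv_lt_0_compat; [apply Rmult_lt_0_compat, pow_lt|]; assumption. }
  destruct (ceilZ_spec x) as [_ Hup].
  assert (Hz : (0 < ceilZ x)%Z) by (apply lt_IZR; lra).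
  split; [lia|]. rewrite INR_IZR_INZ, Z2Nat.id by lia. exact Hup.
Qed.

Lemma ratio_in_range lam l n : 0 < lam -> 0 < l -> (nlam lam l <= n)%nat ->
  (0 < n)%nat /\ 0 < lam * l ^ 2 / INR n ^ 2 <= lamhat.
Proof.
  intros Hlam Hl Hn. destruct (sqrt_le_nlam lam l Hlam Hl) as [H1 Hsqrt].
  pose proof lamhat_pos. assert (Hn0 : (0 < n)%nat) by lia. split; [exact Hn0|].
  assert (HN : 0 < INR n) by (apply lt_0_INR; lia).
  assert (HL : 0 < lam * l ^ 2) by (apply Rmult_lt_0_compat, pow_lt; assumption).
  apply le_INR in Hn.
  assert (Hratio : lam * l ^ 2 / lamhat <= INR n ^ 2).
  { rewrite <- (sqrt_sqrt (lam * l ^ 2 / lamhat)) by (apply Rlt_le, Rdiv_lt_0_compat; assumption).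
    pose proof (sqrt_pos (lam * l ^ 2 / lamhat)). nra. }
  split; [apply Rdiv_lt_0_compat, pow_lt; assumption|].
  apply (Rmult_le_reg_r (INR n ^ 2)); [apply pow_lt, HN|].
  apply (Rmult_le_reg_r (/ lamhat)); [apply Rinv_0_lt_compat; assumption|].
  replace (lam * l ^ 2 / INR n ^ 2 * INR n ^ 2 * / lamhat) with (lam * l ^ 2 / lamhat) by (field; lra).
  replace (lamhat * INR n ^ 2 * / lamhat) with (INR n ^ 2) by (field; lra). exact Hratio.
Qed.

Lemma ratio_eq_lamhat_iff lam l n : 0 < lam -> 0 < l -> (nlam lam l <= n)%nat ->
  lam * l ^ 2 / INR n ^ 2 = lamhat <->
  (exists m : nat, lam * l ^ 2 = INR m ^ 2 * lamhat) /\ n = nlam lam l.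
Proof.
  intros Hlam Hl Hn. destruct (ratio_in_range lam l n Hlam Hl Hn) as [Hn0 _].
  assert (HN : 0 < INR n) by (apply lt_0_INR; lia).
  split.
  - intros Hc. assert (Hm : lam * l ^ 2 = INR n ^ 2 * lamhat) by (rewrite <- Hc; field; lra).
    split; [now exists n|]. symmetry. now apply nlam_sqr.
  - intros [[m Hm] Hnl]. rewrite (nlam_sqr lam l m Hm) in Hnl. subst m.
    rewrite Hm. field. lra.
Qed.

Theorem lemma4p5 (lam l : R) (n : nat) :
  0 < lam -> 0 < l -> (nlam lam l <= n)%nat ->
  energy_larc lam l n <= energy_sarc lam l n /\
  (energy_larc lam l n = energy_sarc lam l n <->
     ((exists m : nat, lam * l ^ 2 = (INR m) ^ 2 * lamhat) /\ n = nlam lam l)).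
Proof.
  intros Hlam Hl Hn.
  destruct (ratio_in_range lam l n Hlam Hl Hn) as [Hn0 Hc].
  set (c := lam * l ^ 2 / INR n ^ 2) in *.
  assert (Hscale : 0 < INR n ^ 2 / l) by (apply Rdiv_lt_0_compat; [apply pow_lt, lt_0_INR; lia|lra]).
  destruct (q1_spec c Hc) as [H1 _]. destruct (q2_spec c Hc) as [H2 _].
  pose proof inv_sqrt2_bounds. destruct qstar_spec as [Hs _]. destruct qhat_spec as [Hh _].
  assert (Hsarc : energy_sarc lam l n = INR n ^ 2 / l * reduced_energy c (q1 c)).
  { apply Energy_gamma_q_reduced; auto; [lra|apply h2EK_pos; lra]. }
  assert (Hlarc : energy_larc lam l n = INR n ^ 2 / l * reduced_energy c (q2 c)).
  { apply Energy_gamma_q_reduced; auto; [lra|apply h2EK_pos; lra]. }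
  destruct (reduced_energy_q2_le_q1 c Hc) as [Hle Heq].
  rewrite Hsarc, Hlarc, <- (ratio_eq_lamhat_iff lam l n Hlam Hl Hn). fold c.
  rewrite <- (q1_eq_q2_iff c Hc). split; [nra|split].
  - intros E. apply Heq. apply (Rmult_eq_reg_l (INR n ^ 2 / l)); lra.
  - intros ->. reflexivity.
Qed.
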